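(* Let $p$ and $q$ be positive integers, let $m_1<m_2<\cdots<m_q$ be positive integers and let $v_1,\dots,v_q$ be positive integers. Let $A_n$ be the number of ways to tile an $n$-board using $v_i$ colours of $(1,p-1;m_i)$-combs for $i=1,\ldots,q$. Define $s_n$ by $s_n=v_1s_{n-m_1}+\cdots+v_qs_{n-m_q}+\delta_{n,0}$ for $n\ge 0$ and $s_n=0$ for $n<0$. Then for all $n\ge0$ and all $r=0,\ldots,p-1$, \[ A_{pn+r}=s_n^{p-r}s_{n+1}^r . \]
   Context: An $n$-board is the strip $[0,n]\times[0,1]$ divided into $n$ unit square cells. A $(w,g;m)$-comb is a tile consisting of a row of $m$ rectangles (teeth) of size $w\times 1$, consecutive teeth separated by a gap of width $g$; the gaps are not part of the tile and may be occupied by other tiles. A tiling of a board is a placement of translated (unrotated) copies of tiles so that the teeth cover the board exactly with no overlaps; tiles of the same shape but different colours are distinguished. $\delta_{i,j}$ equals $1$ if $i=j$ and $0$ otherwise. *)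

From mathcomp Require Import all_boot.
Set Implicit Arguments. Unset Strict Implicit. Unset Printing Implicit Defensive.

(* Combs (1, p-1; m_i): a tooth is one cell, consecutive
   teeth p apart.  Tile type i (0 <= i < q) has m i teeth and v i colours.
   A placed tile is (i, c, x): type i, colour c (< v i), leftmost tooth at
   cell x; it covers cells x, x+p, ..., x+(m i - 1)p.  Colours are encoded
   in 'I_(maxcol v) with the validity constraint c < v i. *)

Definition maxcol (q : nat) (v : 'I_q -> nat) : nat := \max_(i < q) v i.

Definition placement (q : nat) (v : 'I_q -> nat) (N : nat) : finType :=
  ('I_q * 'I_(maxcol v) * 'I_N)%type.

Definition covers (p q : nat) (m v : 'I_q -> nat) (N : nat)
    (t : placement v N) (j : nat) : bool :=
  let: (i, _, x) := t in
  [&& (x <= j)%N, ((j - x) %% p == 0)%N & ((j - x) %/ p < m i)%N].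

Definition valid (p q : nat) (m v : 'I_q -> nat) (N : nat)
    (t : placement v N) : bool :=
  let: (i, c, x) := t in
  ((c < v i)%N && (x + (m i).-1 * p < N)%N).

Definition is_tiling (p q : nat) (m v : 'I_q -> nat) (N : nat)
    (S : {set placement v N}) : bool :=
  [forall t in S, valid p m t] &&
  [forall j : 'I_N, #|[set t in S | covers p m t j]| == 1%N].

Definition A (p q : nat) (m v : 'I_q -> nat) (N : nat) : nat :=
  #|[set S : {set placement v N} | is_tiling p m S]|.

From mathcomp Require Import all_boot zify.
Set Implicit Arguments. Unset Strict Implicit. Unset Printing Implicit Defensive.

(* A comb (1, p-1; m) covers m consecutive cells of a single residue class mod p, so
   the residue classes are p independent columns, r of height n + 1 and p - r of
   height n, and a column of height h is tiled by bars of lengths m_i in v_i colours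
   in s_h ways.  We count tilings of staircase regions, where column r keeps its
   lowest f r cells, by induction on the area: the tile covering the top cell of a
   nonempty column has some type i with m_i <= f r and any of v_i colours, and
   removing it leaves the staircase with that column lowered by m_i, which is the
   recursion defining s. *)

Lemma prod_ord_ltn (F : bool -> nat) n r : r <= n ->
  \prod_(i < n) F (i < r) = F true ^ r * F false ^ (n - r).
Proof.
move=> le_rn.
rewrite -(big_mkord xpredT (fun i => F (i < r))) (big_cat_nat (leq0n r) le_rn) /=.
rewrite (@eq_big_nat _ _ _ 0 r _ (fun=> F true)) => [|i /andP[_ ->] //].
rewrite (@eq_big_nat _ _ _ r n _ (fun=> F false)) => [|i /andP[]]; last first.
  by rewrite leqNgt => /negbTE ->.
by rewrite !prod_nat_const_nat subn0.
Qed.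

Section Tilings.
Variables (p q : nat) (m v : 'I_q -> nat) (N : nat).
Hypothesis p_gt0 : 0 < p.
Hypothesis m_gt0 : forall i, 0 < m i.

Local Notation tile := (placement v N).

Definition tiling_of (D : pred nat) (S : {set tile}) : bool :=
  [forall t in S, valid p m t && [forall j : 'I_N, covers p m t j ==> D j]] &&
  [forall j : 'I_N, D j ==> (#|[set t in S | covers p m t j]| == 1)].

Definition ntilings (D : pred nat) : nat := #|[set S | tiling_of D S]|.

Lemma A_ntilings : A p m v N = ntilings [pred j | j < N].
Proof.
apply: eq_card => S; rewrite !inE /is_tiling /tiling_of.
congr (_ && _); apply: eq_forallb => x; last by rewrite /= ltn_ord.
suff -> : [forall j : 'I_N, covers p m x j ==> [pred j | j < N] j] by rewrite andbT.
by apply/forallP => j; rewrite /= ltn_ord implybT.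
Qed.

Lemma eq_ntilings D D' : D =1 D' -> ntilings D = ntilings D'.
Proof.
move=> eqD; apply: eq_card => S; rewrite !inE /tiling_of.
congr (_ && _); apply: eq_forallb => x; last by rewrite eqD.
by congr (_ ==> (_ && _)); apply: eq_forallb => j; rewrite eqD.
Qed.

Lemma coversP i c (x : 'I_N) j :
  reflect (exists2 k, k < m i & j = x + k * p) (covers p m ((i, c, x) : tile) j).
Proof.
apply: (iffP and3P) => [[le_xj /eqP dvd_p lt_m] | [k lt_km ->]].
  exists ((j - x) %/ p) => //.
  by rewrite -[_ %/ _ * _]addn0 -dvd_p -divn_eq subnKC.
by rewrite leq_addr addKn modnMl mulnK.
Qed.

Lemma ntilings_empty D : (forall j, j < N -> ~~ D j) -> ntilings D = 1.
Proof.
move=> outD; apply/eqP/cards1P; exists set0; apply/setP => S; rewrite !inE.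
apply/idP/eqP => [/andP[/forall_inP tileS _] | ->]; last first.
  by apply/andP; split; [apply/forall_inP => t; rewrite inE |
    apply/forallP => j; rewrite (negbTE (outD j _))].
apply/setP => -[[i c] x]; rewrite inE; apply/negP => /tileS /andP[_ /forallP/(_ x)].
have /coversP-> : exists2 k, k < m i & x = x + k * p :> nat.
  by exists 0; rewrite ?addn0.
by rewrite (negbTE (outD x _)).
Qed.

Lemma card_covering (S : {set tile}) j :
  #|[set t in S | covers p m t j]| = \sum_(t in S) covers p m t j.
Proof.
rewrite -sum1_card big_mkcond [RHS]big_mkcond; apply: eq_bigr => t _.
by rewrite inE; case: (t \in S); case: covers.
Qed.

Lemma covering_tile_unique D S (j : 'I_N) t t' : tiling_of D S -> D j ->
  t \in S -> t' \in S -> covers p m t j -> covers p m t' j -> t = t'.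
Proof.
case/andP=> _ /forallP/(_ j)/implyP onceS /onceS/cards1P[t0 Ej] tS t'S tj t'j.
have inj u : u \in S -> covers p m u j -> u = t0.
  by move=> uS uj; apply/set1P; rewrite -Ej inE uS.
by rewrite (inj t tS tj) (inj t' t'S t'j).
Qed.

Section Peel.
Variables (c0 : nat) (c0_lt : c0 < N).

Lemma top_tile_start_lt (i : 'I_q) : c0 - (m i).-1 * p < N.
Proof. exact: leq_ltn_trans (leq_subr _ _) c0_lt. Qed.

(* The tile of type ic.1 and colour ic.2 whose last tooth is on cell c0; if it is too
   long, truncated subtraction starts it at 0, a case excluded by [fits]. *)
Definition top_tile (ic : 'I_q * 'I_(maxcol v)) : tile :=
  (ic.1, ic.2, Ordinal (top_tile_start_lt ic.1)).

Definition fits (D : pred nat) (ic : 'I_q * 'I_(maxcol v)) : bool :=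
  [&& ic.2 < v ic.1, (m ic.1).-1 * p <= c0 &
      [forall j : 'I_N, covers p m (top_tile ic) j ==> D j]].

Definition peel (D : pred nat) (ic : 'I_q * 'I_(maxcol v)) : pred nat :=
  [pred j | D j && ~~ covers p m (top_tile ic) j].

Lemma top_tile_covers ic : (m ic.1).-1 * p <= c0 -> covers p m (top_tile ic) c0.
Proof.
case: ic => i c le_c0; apply/(coversP i c (Ordinal (top_tile_start_lt i))).
exists (m i).-1; last by rewrite /= subnK.
by rewrite prednK.
Qed.

Lemma top_tile_inj : injective top_tile.
Proof. by case=> [i c] [i' c'] [-> ->]. Qed.

Lemma top_tile_notin D ic S :
  fits D ic -> tiling_of (peel D ic) S -> top_tile ic \notin S.
Proof.
case/and3P=> _ le_c0 _ /andP[/forall_inP tileS _]; apply/negP => /tileS.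
case/andP=> _ /forallP/(_ (Ordinal c0_lt))/implyP/(_ (top_tile_covers le_c0)).
by case/andP=> _ /negP; apply; apply: top_tile_covers.
Qed.

Lemma tiling_of_setU1 D ic S :
  fits D ic -> tiling_of (peel D ic) S -> tiling_of D (top_tile ic |: S).
Proof.
move=> fitD tileS; have notinS := top_tile_notin fitD tileS.
case/and3P: fitD => lt_v le_c0 /forallP inD.
case/andP: tileS => /forall_inP tileS /forallP onceS.
apply/andP; split.
  apply/forall_inP => t /setU1P[-> | tS].
    by rewrite /valid /= subnK // lt_v c0_lt; apply/forallP.
  case/andP: (tileS t tS) => -> /forallP inPeel; apply/forallP => j.
  by apply/implyP => /(implyP (inPeel j)) /andP[].
apply/forallP => j; apply/implyP => Dj.
rewrite card_covering big_setU1 //; case topj: (covers p m (top_tile ic) j).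
  rewrite big1 // => t tS; case tj: (covers p m t j) => //.
  have /andP[_ /forallP/(_ j)/implyP/(_ tj)/andP[_]] := tileS t tS.
  by rewrite topj.
rewrite -card_covering; apply: (implyP (onceS j)).
by apply/andP; rewrite topj.
Qed.

Lemma tiling_of_setD1 D ic S : tiling_of D S -> top_tile ic \in S ->
  tiling_of (peel D ic) (S :\ top_tile ic).
Proof.
case/andP=> /forall_inP tileS /forallP onceS topS.
have split_cover (j : 'I_N) : D j ->
    covers p m (top_tile ic) j + \sum_(t in S :\ top_tile ic) covers p m t j = 1.
  by move=> /(implyP (onceS j)); rewrite card_covering (big_setD1 _ topS) => /eqP.
apply/andP; split.
  apply/forall_inP => t /setD1P[t_top tS].
  case/andP: (tileS t tS) => -> /forallP inD; apply/forallP => j.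
  apply/implyP => tj; have Dj := implyP (inD j) tj.
  apply/andP; split=> //; apply/negP => topj.
  have := split_cover j Dj; rewrite topj (bigD1 t) ?tj //=.
  by rewrite !inE t_top.
apply/forallP => j; apply/implyP => /andP[Dj /negbTE topj].
by rewrite card_covering; have := split_cover j Dj; rewrite topj add0n => ->.
Qed.

Section TopCell.
Variables (D : pred nat) (S : {set tile}).
Hypotheses (Dc0 : D c0) (Dc0p : ~~ D (c0 + p)) (tileS : tiling_of D S).

Lemma exists_top_tile : exists2 ic, fits D ic & top_tile ic \in S.
Proof.
case/andP: (tileS) => /forall_inP validS /forallP onceS.
have /cards1P[[[i c] x] Ec0] := implyP (onceS (Ordinal c0_lt)) Dc0.
have /setIdP[xS /coversP[k lt_km def_c0]] : (i, c, x) \in [set t in S | covers p m t c0].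
  by rewrite Ec0 set11.
case/andP: (validS _ xS) => /andP[lt_v x_end] /forallP inD.
have def_k : k = (m i).-1.
  apply/eqP; rewrite eqn_leq -ltnS prednK // lt_km /= leqNgt; apply/negP => lt_k.
  have c0p_lt : c0 + p < N.
    apply: leq_ltn_trans x_end.
    by rewrite def_c0 -addnA -mulSnr leq_add2l leq_mul2r lt_k orbT.
  move/negP: Dc0p; apply; apply: (implyP (inD (Ordinal c0p_lt))).
  apply/coversP; exists k.+1; first by rewrite -(prednK (m_gt0 i)).
  by rewrite /= def_c0 mulSnr addnA.
have top_x : top_tile (i, c) = (i, c, x).
  by congr (_, _); apply: val_inj; rewrite /= def_c0 def_k addnK.
exists (i, c); last by rewrite top_x.
by rewrite /fits top_x /= lt_v def_c0 def_k leq_addl; apply/forallP.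
Qed.

Lemma unique_top_tile :
  exists ic0, forall ic, fits D ic && (top_tile ic \in S) = (ic == ic0).
Proof.
have [ic0 fit0 in0] := exists_top_tile; exists ic0 => ic.
apply/andP/eqP => [[fit_ic in_ic] | -> //]; apply: top_tile_inj.
apply: (covering_tile_unique (j := Ordinal c0_lt) tileS) => //;
  apply: top_tile_covers; [case/and3P: fit_ic | case/and3P: fit0] => //.
Qed.

End TopCell.

Lemma card_tilings_with_top_tile D ic : fits D ic ->
  #|[set S | tiling_of D S & top_tile ic \in S]| = ntilings (peel D ic).
Proof.
move=> fitD; rewrite /ntilings.
rewrite -[RHS](card_in_imset (f := fun S => top_tile ic |: S)); last first.
  move=> S1 S2; rewrite !inE => tile1 tile2 eqS.
  by rewrite -(setU1K (top_tile_notin fitD tile1)) eqS setU1K // (top_tile_notin fitD).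
apply: eq_card => S; rewrite inE; apply/andP/imsetP => [[tileS topS] | [S' ]].
  by exists (S :\ top_tile ic); rewrite ?inE ?tiling_of_setD1 ?setD1K.
by rewrite inE => tileS' ->; rewrite tiling_of_setU1 ?setU11.
Qed.

Lemma ntilings_peel (D : pred nat) : D c0 -> ~~ D (c0 + p) ->
  ntilings D = \sum_(ic | fits D ic) ntilings (peel D ic).
Proof.
move=> Dc0 Dc0p; rewrite /ntilings -sum1dep_card.
rewrite (eq_bigr (fun S : {set tile} => \sum_(ic | fits D ic && (top_tile ic \in S)) 1));
  last by move=> S /(unique_top_tile Dc0 Dc0p)[ic0 def_ic0];
          rewrite (big_pred1 ic0 def_ic0).
rewrite (exchange_big_dep (fits D)) => [|S ic _ /andP[] //]; apply: eq_bigr => ic fitD.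
rewrite sum1dep_card -[RHS]/(ntilings _) -card_tilings_with_top_tile //.
by apply: eq_card => S; rewrite !inE fitD.
Qed.

End Peel.

Definition staircase (f : nat -> nat) : pred nat := [pred j | j %/ p < f (j %% p)].

Lemma modn_column r k : r < p -> (r + k * p) %% p = r.
Proof. by move=> lt_rp; rewrite addnC modnMDl modn_small. Qed.

Lemma divn_column r k : r < p -> (r + k * p) %/ p = k.
Proof. by move=> lt_rp; rewrite addnC divnMDl // divn_small // addn0. Qed.

Lemma staircase_board n r : r < p ->
  staircase (fun c => n + (c < r)) =1 [pred j | j < p * n + r].
Proof.
move=> lt_rp j; rewrite /staircase /=.
move: (ltn_pmod j p_gt0) (divn_eq j p); move: (j %/ p) (j %% p) => a b lt_bp ->.
by case: (ltnP b r) => [lt_br | le_rb]; rewrite ?addn1 ?addn0; apply/idP/idP; nia.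
Qed.

Section TopOfColumn.
Variables (f : nat -> nat) (r0 : nat).
Hypotheses (lt_r0p : r0 < p) (f_r0_gt0 : 0 < f r0).
Hypothesis top_lt : r0 + (f r0).-1 * p < N.

Lemma staircase_top : staircase f (r0 + (f r0).-1 * p).
Proof. by rewrite /staircase /= modn_column // divn_column // ltn_predL. Qed.

Lemma staircase_above_top : ~~ staircase f (r0 + (f r0).-1 * p + p).
Proof.
by rewrite /staircase /= -addnA -mulSnr prednK // modn_column // divn_column // ltnn.
Qed.

Lemma covers_top_tile_staircase (i : 'I_q) c j : m i <= f r0 ->
  covers p m (top_tile top_lt (i, c)) j =
  (j %% p == r0) && (f r0 - m i <= j %/ p < f r0).
Proof.
move=> le_mf.
have start : r0 + (f r0).-1 * p - (m i).-1 * p = r0 + (f r0 - m i) * p.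
  have -> : (f r0).-1 = (f r0 - m i) + (m i).-1 by have := m_gt0 i; lia.
  by rewrite mulnDl addnA addnK.
apply/(coversP i c (Ordinal (top_tile_start_lt top_lt i)))/idP => /= [[k lt_km ->] |].
  rewrite start -addnA -mulnDl modn_column // divn_column // eqxx /=; lia.
case/andP=> /eqP col_j /andP[lo hi]; exists (j %/ p - (f r0 - m i)); first lia.
by rewrite start -addnA -mulnDl subnKC // {1}(divn_eq j p) col_j addnC.
Qed.

Lemma fits_staircase ic :
  fits top_lt (staircase f) ic = (m ic.1 <= f r0) && (ic.2 < v ic.1).
Proof.
case: ic => i c; rewrite /fits [(i, c).1]/= [(i, c).2]/= andbC.
case: (c < v i); rewrite ?andbF // !andbT.
case: (leqP (m i) (f r0)) => [le_mf | lt_fm].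
  have -> : (m i).-1 * p <= r0 + (f r0).-1 * p.
    by rewrite (leq_trans _ (leq_addl _ _)) // leq_mul2r; apply/orP; right; lia.
  apply/forallP => j; apply/implyP.
  rewrite (covers_top_tile_staircase c j le_mf) /staircase /=.
  by case/andP=> /eqP -> /andP[].
suff /negbTE -> : ~~ ((m i).-1 * p <= r0 + (f r0).-1 * p) by [].
have le_fm : f r0 * p <= (m i).-1 * p by rewrite leq_mul2r -ltnS prednK // lt_fm orbT.
by rewrite -ltnNge; move: le_fm; rewrite -{1}(prednK f_r0_gt0) mulSnr; lia.
Qed.

Lemma peel_staircase (i : 'I_q) c : m i <= f r0 ->
  peel top_lt (staircase f) (i, c) =1 staircase [eta f with r0 |-> f r0 - m i].
Proof.
move=> le_mf j; have := covers_top_tile_staircase c j le_mf.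
rewrite /peel /staircase /= => ->.
case: eqP => [-> | _]; last by rewrite andbT.
by case: leqP; case: ltnP => //=; lia.
Qed.

End TopOfColumn.

Lemma sum_colours (P : pred 'I_q) (F : 'I_q -> nat) :
  \sum_(ic : 'I_q * 'I_(maxcol v) | P ic.1 && (ic.2 < v ic.1)) F ic.1 =
  \sum_(i | P i) v i * F i.
Proof.
rewrite -(pair_big_dep P (fun i (c : 'I_(maxcol v)) => c < v i) (fun i _ => F i)).
apply: eq_bigr => i _; rewrite -(big_ord_widen _ (fun=> F i) (leq_bigmax i)).
by rewrite sum_nat_const card_ord.
Qed.

Section Counting.
Variable s : nat -> nat.
Hypothesis s_rec : forall n, s n = \sum_(i < q | m i <= n) v i * s (n - m i) + (n == 0).

Lemma ntilings_staircase f : (forall j, staircase f j -> j < N) ->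
  ntilings (staircase f) = \prod_(r < p) s (f r).
Proof.
have [k] := ubnP (\sum_(r < p) f r); elim: k f => // k IH f lt_sum_k fitN.
have [r0 f_r0_gt0 | f0] := pickP (fun r : 'I_p => 0 < f r); last first.
  have f_eq0 (r : 'I_p) : f r = 0 by apply/eqP; rewrite -leqn0 leqNgt f0.
  have s0 : s 0 = 1 by rewrite s_rec big_pred0 // => i; rewrite leqNgt m_gt0.
  rewrite ntilings_empty => [|j _]; first by rewrite big1 // => r _; rewrite f_eq0.
  by rewrite /staircase /= (f_eq0 (Ordinal (ltn_pmod j p_gt0))).
have top_lt := fitN _ (staircase_top (ltn_ord r0) f_r0_gt0).
rewrite (ntilings_peel top_lt (staircase_top _ _) (staircase_above_top _ _)) //.
rewrite (eq_bigl _ _ (fits_staircase (ltn_ord r0) f_r0_gt0 top_lt)).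
pose peeled (i : 'I_q) := [eta f with val r0 |-> f r0 - m i].
rewrite (eq_bigr (fun ic => \prod_(r < p) s (peeled ic.1 r))); last first.
  case=> i c /andP[le_mf _]; rewrite (eq_ntilings (peel_staircase _ _ _ c le_mf)) //.
  apply: IH => [|j]; last first.
    rewrite /staircase /=; case: eqP => [col_j lt_j | _ /fitN //].
    by apply: fitN; rewrite /staircase /= col_j (leq_trans lt_j) ?leq_subr.
  rewrite -ltnS (leq_trans _ lt_sum_k) // ltnS.
  rewrite (bigD1 r0) //= [X in _ < X](bigD1 r0) //=.
  rewrite eqxx (eq_bigr (fun r : 'I_p => f r)) => [|r]; last exact: ifN.
  by rewrite ltn_add2r; have := m_gt0 i; lia.
rewrite (sum_colours (fun i => m i <= f r0) (fun i => \prod_(r < p) s (peeled i r))).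
rewrite [RHS](bigD1 r0) //= s_rec (gtn_eqF f_r0_gt0) addn0 big_distrl /=.
apply: eq_bigr => i _; rewrite (bigD1 r0) //= eqxx -mulnA; congr (_ * (_ * _)).
by apply: eq_bigr => r ne_r; rewrite ifN.
Qed.

End Counting.
End Tilings.

Unset Implicit Arguments.

Theorem theorem2 (p q : nat) (m v : 'I_q -> nat)
  (hp : (0 < p)%N) (hq : (0 < q)%N)
  (hm_pos : forall i, (0 < m i)%N)
  (hm_incr : forall i j : 'I_q, (i < j)%N -> (m i < m j)%N)
  (hv_pos : forall i, (0 < v i)%N)
  (s : nat -> nat)
  (hs : forall n : nat,
      s n = (\sum_(i < q | (m i <= n)%N) v i * s (n - m i) + (n == 0%N))%N) :
  forall n r : nat, (r < p)%N ->
    A p m v (p * n + r) = (s n ^ (p - r) * s (n.+1) ^ r)%N.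
Proof.
move=> n r lt_rp; have board := staircase_board hp n lt_rp.
rewrite A_ntilings -(eq_ntilings _ _ _ _ board).
rewrite (ntilings_staircase hp hm_pos hs) => [|j]; last by rewrite board.
by rewrite (prod_ord_ltn (fun b => s (n + b)) (ltnW lt_rp)) addn1 addn0 mulnC.
Qed.
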